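(* Let $\Phi=(A;\{E_i\}_{i=0}^d;A^*;\{E^*_i\}_{i=0}^d)$ be a tridiagonal system on $V$ with $d\ge1$, such that $(A,A^* )$ satisfies the $q$-Serre relations, with $E_iV$ the eigenspace of $A$ for $\theta_i=q^{2i-d}$ and $E^*_iV$ the eigenspace of $A^*$ for $\theta^*_i=q^{d-2i}$. Let $\{U_i\}_{i=0}^d$ be its split decomposition, $K:V\to V$ the linear map acting on $U_i$ as $q^{d-2i}I$, $t$ a scalar, and $B^*=tA^*+(1-t)K$. Then $B^*$ is diagonalizable with eigenvalues $\theta^*_0,\dots,\theta^*_d$, and for $0\le i\le d$ the $\theta^*_i$-eigenspace of $B^*$ has dimension $\dim U_i$.
   Context: $\mathcal K$ is an algebraically closed field; $V$ is a nonzero finite-dimensional vector space over $\mathcal K$; $q\in\mathcal K$ is nonzero and not a root of unity; $[3]_q=q^2+1+q^{-2}$. The $q$-Serre relations for $(X,Y)$: $X^3Y-[3]_qX^2YX+[3]_qXYX^2-YX^3=0$ and $Y^3X-[3]_qY^2XY+[3]_qYXY^2-XY^3=0$. Primitive idempotent of a diagonalizable $X$ for eigenvalue $\lambda_i$: $\prod_{j\ne i}\frac{X-\lambda_jI}{\lambda_i-\lambda_j}$. A tridiagonal system on $V$ is a sequence $(A;\{E_i\}_{i=0}^d;A^*;\{E^*_i\}_{i=0}^d)$ with $A,A^*$ diagonalizable, $\{E_i\}$, $\{E^*_i\}$ orderings of their primitive idempotents, $E_iA^*E_j=0$ and $E^*_iAE^*_j=0$ when $|i-j|>1$, and no subspaces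 other than $0,V$ invariant under both $A$ and $A^*$. Split decomposition: $U_i=(E^*_0V+\cdots+E^*_iV)\cap(E_iV+\cdots+E_dV)$; known: $V=U_0\oplus\cdots\oplus U_d$ with each $U_i\ne0$, $(A-\theta_iI)U_i\subseteq U_{i+1}$, $(A^*-\theta^*_iI)U_i\subseteq U_{i-1}$ ($U_{-1}=U_{d+1}=0$). *)

(* V = 'rV[F]_n (row vectors), linear maps = 'M[F]_n acting on
   the right (v |-> v *m A); subspaces = row spaces of matrices (%MS). *)
From HB Require Import structures.
From mathcomp Require Import all_boot all_order all_algebra.
Set Implicit Arguments. Unset Strict Implicit. Unset Printing Implicit Defensive.
Import Order.TTheory GRing.Theory Num.Theory.
Local Open Scope ring_scope.

Section TD.
Variable F : fieldType.

Definition qint3 (q : F) : F := q ^+ 2 + 1 + q ^- 2.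

Definition qSerre n (q : F) (X Y : 'M[F]_n) : Prop :=
  X *m X *m X *m Y - qint3 q *: (X *m X *m Y *m X)
    + qint3 q *: (X *m Y *m X *m X) - Y *m X *m X *m X = 0 /\
  Y *m Y *m Y *m X - qint3 q *: (Y *m Y *m X *m Y)
    + qint3 q *: (Y *m X *m Y *m Y) - X *m Y *m Y *m Y = 0.

Definition qtheta (q : F) (d i : nat) : F := q ^ ((2 * i)%:Z - d%:Z).
Definition qthetas (q : F) (d i : nat) : F := q ^ (d%:Z - (2 * i)%:Z).

Definition prim_idem n (X : 'M[F]_n) (th : nat -> F) (d i : nat) : 'M[F]_n :=
  \prod_(j < d.+1 | (j : nat) != i) ((th i - th j)^-1 *: (X - (th j)%:M)).

(* (A; {E_i}; A*; {E*_i}) is a tridiagonal system on V, where E_i is the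
   primitive idempotent of A for th i and E*_i that of A* for ths i, i.e.
   th 0..th d are the (distinct) eigenvalues of A in the order given by the
   system, and similarly for A*. *)
Definition tridiagonal_system n (d : nat) (A As : 'M[F]_n) (th ths : nat -> F)
  : Prop :=
  [/\ diagonalizable A, diagonalizable As,
      {in gtn d.+1 &, injective th} /\ {in gtn d.+1 &, injective ths},
      (forall a, eigenvalue A a <-> exists2 i, (i <= d)%N & a = th i) /\
      (forall a, eigenvalue As a <-> exists2 i, (i <= d)%N & a = ths i) &
      (forall i j, (i <= d)%N -> (j <= d)%N -> (i.+1 < j)%N || (j.+1 < i)%N ->
         prim_idem A th d i *m As *m prim_idem A th d j = 0) /\
      (forall i j, (i <= d)%N -> (j <= d)%N -> (i.+1 < j)%N || (j.+1 < i)%N ->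
         prim_idem As ths d i *m A *m prim_idem As ths d j = 0) /\
      (forall W : 'M[F]_n, (W *m A <= W)%MS -> (W *m As <= W)%MS ->
         (W == (0 : 'M[F]_n))%MS \/ (W == 1%:M)%MS)].

Definition split_comp n (d : nat) (A As : 'M[F]_n) (th ths : nat -> F)
  (i : nat) : 'M[F]_n :=
  ((\sum_(j < d.+1 | (j <= i)%N) prim_idem As ths d j)
   :&: (\sum_(j < d.+1 | (i <= j)%N) prim_idem A th d j))%MS.

End TD.

From HB Require Import structures.
From mathcomp Require Import all_boot all_order all_algebra.
From mathcomp Require Import zify.
Set Implicit Arguments. Unset Strict Implicit. Unset Printing Implicit Defensive.
Import Order.TTheory GRing.Theory Num.Theory.
Local Open Scope ring_scope.

(* Put Vup j = E_jV + ... + E_dV and Vdn j = E*_0V + ... + E*_(j-1)V.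
   Tridiagonality gives (A - th_j)(Vdn j :&: Vup j) <= Vdn (j+1) :&: Vup (j+1)
   and (A* - th*_j)(Vdn (j+1) :&: Vup (j+1)) <= Vdn j :&: Vup j, so the sum of
   these intersections is invariant under A and A*; it lies in Vup 1 <> V, so
   it is 0 by irreducibility.  Comparing dimensions with the same fact for
   (A*, A) yields V = Vdn j (+) Vup j for all j.  Hence U_i = Vdn (i+1) :&: Vup i
   has the dimension of E*_iV, the U_i span V, and (A* - th*_i) U_i <= U_(i-1).
   So A* = th*_i + N and B* = th*_i + tN on U_i, where N lowers the index: for
   t <> 0 the map D acting on U_i as t^i satisfies B* D = D A*, so B* is
   similar to A*, while for t = 0, B* = K acts on U_i as th*_i. *)

Lemma ord_injective (T : Type) d (f : nat -> T) :
  {in gtn d.+1 &, injective f} -> injective (fun j : 'I_d.+1 => f j).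
Proof. by move=> f_inj i j /f_inj; rewrite !inE !ltn_ord => /(_ isT isT)/val_inj. Qed.

Section MatrixFacts.
Variables (F : fieldType) (n : nat).

Lemma eq_mulmx_submx m (W : 'M_(m, n)) (M N : 'M[F]_n) :
  (forall v : 'rV_n, (v <= W)%MS -> v *m M = v *m N) ->
  forall p (B : 'M_(p, n)), (B <= W)%MS -> B *m M = B *m N.
Proof.
move=> eqMN p B sBW; apply/row_matrixP => i; rewrite !row_mul; apply: eqMN.
exact: submx_trans (row_sub i B) sBW.
Qed.

Lemma mx_eq_on_span d (W : nat -> 'M[F]_n) (M N : 'M[F]_n) :
  (1%:M <= \sum_(i < d.+1) W i)%MS ->
  (forall i, (i <= d)%N -> forall v : 'rV_n, (v <= W i)%MS -> v *m M = v *m N) ->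
  M = N.
Proof.
move=> spanW eqMN; rewrite -[M]mul1mx -[N]mul1mx.
move: spanW => /sub_sumsmxP [u ->]; rewrite !mulmx_suml; apply: eq_bigr => i _.
rewrite -!mulmxA; congr (_ *m _); apply: (eq_mulmx_submx _ (submx_refl (W i))).
by apply: eqMN; rewrite -ltnS.
Qed.

Lemma mulmx_prod_eigen (v : 'rV[F]_n) I (r : seq I) (P : pred I)
    (f : I -> 'M[F]_n) (g : I -> F) :
  (forall j, P j -> v *m f j = g j *: v) ->
  v *m \prod_(j <- r | P j) f j = (\prod_(j <- r | P j) g j) *: v.
Proof.
move=> vf; elim: r => [|j r IH]; first by rewrite !big_nil mulmx1 scale1r.
rewrite !big_cons; case: ifP => Pj //.
by rewrite -mulmxE mulmxA vf // -scalemxAl IH scalerA.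
Qed.

Lemma submx_mul_shift m p (U : 'M[F]_(m, n)) (W : 'M[F]_(p, n)) (M : 'M[F]_n) c :
  (U <= W)%MS -> (U *m (M - c%:M) <= W)%MS = (U *m M <= W)%MS.
Proof.
move=> sUW; have cUW : (c *: U <= W)%MS by apply: scalemx_sub.
rewrite mulmxBr mul_mx_scalar; apply/idP/idP => sMW.
  by rewrite -[U *m M](subrK (c *: U)) addmx_sub.
by rewrite addmx_sub // eqmx_opp.
Qed.

Lemma eigenspace_conj (X B D : 'M[F]_n) a :
  D \in unitmx -> B *m D = D *m X ->
  (eigenspace X a *m invmx D <= eigenspace B a)%MS.
Proof.
move=> uD BD; have /eigenspaceP EX : (eigenspace X a <= eigenspace X a)%MS by [].
have DB : invmx D *m B = X *m invmx D.
  by rewrite -[B](mulmxK uD) BD !mulmxA mulVmx // mul1mx.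
by apply/eigenspaceP; rewrite -mulmxA DB mulmxA EX -scalemxAl.
Qed.

Lemma sumsmx_subpred (I : finType) (P Q : pred I) (B : I -> 'M[F]_n) :
  (forall i, P i -> Q i) -> (\sum_(i | P i) B i <= \sum_(i | Q i) B i)%MS.
Proof. by move=> PQ; apply/sumsmx_subP => i /PQ Qi; apply: sumsmx_sup Qi _. Qed.

Lemma sum_eigenspaces_mul_shift (X : 'M[F]_n) d (th : nat -> F) (P : pred 'I_d.+1) j :
  ((\sum_(l | P l) eigenspace X (th l))%MS *m (X - (th j)%:M)
    <= \sum_(l | P l && ((l : nat) != j)) eigenspace X (th l))%MS.
Proof.
rewrite sumsmxMr; apply/sumsmx_subP => l Pl.
have /eigenspaceP Xl : (eigenspace X (th l) <= eigenspace X (th l))%MS by [].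
rewrite mulmxBr Xl mul_mx_scalar -scalerBl.
have [->|ne_lj] := eqVneq (l : nat) j; first by rewrite subrr scale0r sub0mx.
by apply/scalemx_sub/(sumsmx_sup l); rewrite ?Pl.
Qed.

Lemma rank_sum_eigenspaces (X : 'M[F]_n) d (th : nat -> F) (P : pred 'I_d.+1) :
  {in gtn d.+1 &, injective th} ->
  \rank (\sum_(l | P l) eigenspace X (th l)) =
    (\sum_(l | P l) \rank (eigenspace X (th l)))%N.
Proof.
move=> th_inj; apply/mxdirectP.
exact: mxdirect_sum_eigenspace (in2W (ord_injective th_inj)).
Qed.

End MatrixFacts.

Section ScalarFamily.
Variables (F : fieldType) (n d : nat) (M : 'M[F]_n).
Variables (W : nat -> 'M[F]_n) (lam : nat -> F).
Hypothesis scalarW :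
  forall i, (i <= d)%N -> forall v : 'rV_n, (v <= W i)%MS -> v *m M = lam i *: v.
Hypothesis spanW : (1%:M <= \sum_(i < d.+1) W i)%MS.
Hypothesis lam_inj : {in gtn d.+1 &, injective lam}.

Lemma scalar_family_sub_eigenspace i : (i <= d)%N -> (W i <= eigenspace M (lam i))%MS.
Proof.
move=> le_id; apply/eigenspaceP/row_matrixP => j.
by rewrite row_mul linearZ /=; apply: scalarW => //; apply: row_sub.
Qed.

Lemma scalar_family_annihilator : \prod_(j < d.+1) (M - (lam j)%:M) = 0.
Proof.
apply: (mx_eq_on_span spanW) => i le_id v Wv; rewrite mulmx0.
have -> : v *m \prod_(j < d.+1) (M - (lam j)%:M) =
    (\prod_(j < d.+1) (lam i - lam j)) *: v.
  by apply: mulmx_prod_eigen => j _; rewrite mulmxBr (scalarW le_id Wv) mul_mx_scalar scalerBl.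
by rewrite (bigD1 (inord i)) //= inordK ?ltnS // subrr mul0r scale0r.
Qed.

Lemma scalar_family_eigenvalue a : eigenvalue M a -> exists2 i, (i <= d)%N & a = lam i.
Proof.
case/eigenvalueP => v Mv nz_v.
have : v *m \prod_(j < d.+1) (M - (lam j)%:M) = 0.
  by rewrite scalar_family_annihilator mulmx0.
have -> : v *m \prod_(j < d.+1) (M - (lam j)%:M) = (\prod_(j < d.+1) (a - lam j)) *: v.
  by apply: mulmx_prod_eigen => j _; rewrite mulmxBr Mv mul_mx_scalar scalerBl.
move/eqP; rewrite scaler_eq0 (negPf nz_v) orbF prodf_seq_eq0.
by case/hasP => j _ /=; rewrite subr_eq0 => /eqP ->; exists j; rewrite // -ltnS.
Qed.

Lemma scalar_family_diagonalizable : diagonalizable M.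
Proof.
apply/diagonalizablePeigen; exists (map lam (iota 0 d.+1)).
  rewrite map_inj_in_uniq ?iota_uniq // => x y; rewrite !mem_iota.
  exact: lam_inj.
apply/eqmxP/andP; split; first exact: submx1.
rewrite big_map -[iota 0 d.+1]/(index_iota 0 d.+1) big_mkord.
apply: submx_trans spanW _; apply: sumsmxS => i _.
by apply: scalar_family_sub_eigenspace; rewrite -ltnS.
Qed.

Lemma scalar_family_rank i : (i <= d)%N -> \rank (eigenspace M (lam i)) = \rank (W i).
Proof.
have rankW (j : 'I_d.+1) : (\rank (W j) <= \rank (eigenspace M (lam j))
    ?= iff (\rank (W j) == \rank (eigenspace M (lam j))))%N.
  by apply/leqif_eq/mxrankS/scalar_family_sub_eigenspace; rewrite -ltnS.
have [le_sums eq_sums] := leqif_sum (fun j (_ : predT j) => rankW j).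
have /forall_inP eqW : [forall (j : 'I_d.+1 | predT j),
    \rank (W j) == \rank (eigenspace M (lam j))].
  rewrite -eq_sums eqn_leq le_sums /=.
  rewrite -rank_sum_eigenspaces //; apply: leq_trans (rank_leq_col _) _.
  have := mxrankS spanW; rewrite mxrank1 => /leq_trans; apply.
  exact: (mxrank_sum_leqif _).1.
by move=> le_id; apply/esym/eqP/(eqW (Ordinal (le_id : (i < d.+1)%N))).
Qed.

Lemma scalar_family_spectrum : (forall i, (i <= d)%N -> W i != 0) ->
  [/\ diagonalizable M,
      (forall a, eigenvalue M a <-> exists2 i, (i <= d)%N & a = lam i) &
      (forall i, (i <= d)%N -> \rank (eigenspace M (lam i)) = \rank (W i))].
Proof.
move=> nzW; split; [exact: scalar_family_diagonalizable | | exact: scalar_family_rank].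
move=> a; split; first exact: scalar_family_eigenvalue.
case=> i le_id ->.
by rewrite /eigenvalue -mxrank_eq0 scalar_family_rank // mxrank_eq0 nzW.
Qed.

End ScalarFamily.

Section Eigenspaces.
Variables (F : fieldType) (n d : nat) (X : 'M[F]_n) (th : nat -> F).
Hypothesis diagX : diagonalizable X.
Hypothesis eigX : forall a, eigenvalue X a <-> exists2 i, (i <= d)%N & a = th i.
Hypothesis th_inj : {in gtn d.+1 &, injective th}.

Local Notation Ev i := (eigenspace X (th i)).
Local Notation E i := (prim_idem X th d i).

Lemma eigenspaces_span : (1%:M <= \sum_(i < d.+1) Ev i)%MS.
Proof.
case/diagonalizablePeigen: diagX => rs _ /eqmxP/andP [_ /submx_trans]; apply.
elim: rs => [|r rs IH]; first by rewrite big_nil sub0mx.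
rewrite big_cons addsmx_sub IH andbT.
have [/eqP->|nz] := boolP (eigenspace X r == 0); first exact: sub0mx.
have [i le_id ->] : exists2 i, (i <= d)%N & r = th i by apply/eigX.
exact: (sumsmx_sup (Ordinal (le_id : (i < d.+1)%N))).
Qed.

Lemma conj_spectrum (B D : 'M[F]_n) : D \in unitmx -> B *m D = D *m X ->
  [/\ diagonalizable B,
      (forall a, eigenvalue B a <-> exists2 i, (i <= d)%N & a = th i) &
      (forall i, (i <= d)%N -> \rank (eigenspace B (th i)) = \rank (Ev i))].
Proof.
move=> uD BD; pose W i := Ev i *m invmx D.
have scalarW i : (i <= d)%N -> forall v : 'rV_n, (v <= W i)%MS -> v *m B = th i *: v.
  by move=> _ v /submx_trans/(_ (eigenspace_conj _ uD BD))/eigenspaceP.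
have spanW : (1%:M <= \sum_(i < d.+1) W i)%MS.
  rewrite -sumsmxMr -(mulmxV uD) submxMr //.
  exact: submx_trans (submx1 D) eigenspaces_span.
have rankW i : \rank (W i) = \rank (Ev i).
  by rewrite mxrankMfree // row_free_unit unitmx_inv.
have [|diagB eigB rankB] := scalar_family_spectrum scalarW spanW th_inj.
  by move=> i le_id; rewrite -mxrank_eq0 rankW mxrank_eq0; apply/eigX; exists i.
by split=> // i le_id; rewrite rankB // rankW.
Qed.

Lemma rank_eigenspaces_split k :
  (\rank (\sum_(l < d.+1 | (l < k)%N) Ev l)
    + \rank (\sum_(l < d.+1 | (k <= l)%N) Ev l))%N = n.
Proof.
transitivity (\sum_(l < d.+1) \rank (Ev l))%N.
  rewrite !rank_sum_eigenspaces // [RHS](bigID (fun l : 'I_d.+1 => (l < k)%N)) /=.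
  by congr (_ + _)%N; apply: eq_bigl => l; rewrite -leqNgt.
rewrite -rank_sum_eigenspaces //; apply/eqP.
by rewrite eqn_leq rank_leq_col col_leq_rank -sub1mx eigenspaces_span.
Qed.

Lemma prim_idem_eigen k i (v : 'rV_n) : (k <= d)%N -> (v <= Ev k)%MS ->
  v *m E i = if i == k then v else 0.
Proof.
move=> le_kd /eigenspaceP Xv.
have -> : v *m E i =
    (\prod_(j < d.+1 | (j : nat) != i) ((th i - th j)^-1 * (th k - th j))) *: v.
  apply: mulmx_prod_eigen => j _.
  by rewrite -scalemxAr mulmxBr Xv mul_mx_scalar -scalerBl scalerA.
have [->|ne_ik] := eqVneq i k.
  rewrite big1 ?scale1r // => j ne_ji; rewrite mulVf // subr_eq0.
  by apply: contra ne_ji => /eqP/th_inj; rewrite !inE ltn_ord => /(_ le_kd isT) ->.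
rewrite (bigD1 (Ordinal (le_kd : (k < d.+1)%N))) 1?eq_sym //=.
by rewrite subrr mulr0 mul0r scale0r.
Qed.

Lemma prim_idem_sum : \sum_(i < d.+1) E i = 1%:M.
Proof.
apply: (mx_eq_on_span (W := fun i => Ev i) eigenspaces_span) => k le_kd v Ev_v.
rewrite mulmx_sumr mulmx1 (bigD1 (Ordinal (le_kd : (k < d.+1)%N))) //=.
rewrite (prim_idem_eigen _ le_kd Ev_v) eqxx big1 ?addr0 // => j ne_jk.
by rewrite (prim_idem_eigen _ le_kd Ev_v) ifN.
Qed.

Lemma eigenspace_mul_prim_idem k : (k <= d)%N -> Ev k *m E k = Ev k.
Proof.
move=> le_kd; rewrite -[RHS]mulmx1.
apply: (eq_mulmx_submx _ (submx_refl (Ev k))) => v Ev_v.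
by rewrite mulmx1 (prim_idem_eigen _ le_kd Ev_v) eqxx.
Qed.

Lemma eigenspace_prim_idem i : (i <= d)%N -> (Ev i :=: E i)%MS.
Proof.
move=> le_id; apply/eqmxP/andP; split.
  by rewrite -[X in (X <= _)%MS](eigenspace_mul_prim_idem le_id) submxMl.
apply/eigenspaceP; rewrite -mul_scalar_mx.
apply: (mx_eq_on_span (W := fun i => Ev i) eigenspaces_span) => k le_kd v Ev_v.
rewrite !mulmxA mul_mx_scalar -scalemxAl !(prim_idem_eigen _ le_kd Ev_v).
have [->|_] := eqVneq i k; last by rewrite mul0mx scaler0.
by apply/eigenspaceP.
Qed.

Lemma eigenspace_mul_tridiag (Y : 'M[F]_n) :
  (forall i j, (i <= d)%N -> (j <= d)%N -> (i.+1 < j)%N || (j.+1 < i)%N ->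
     E i *m Y *m E j = 0) ->
  forall k, (k <= d)%N ->
  (Ev k *m Y <= \sum_(l < d.+1 | ((l : nat) <= k.+1)%N && (k <= l.+1)%N) Ev l)%MS.
Proof.
move=> tri k le_kd.
rewrite -(eigenspace_mul_prim_idem le_kd) -[_ *m Y]mulmx1 -prim_idem_sum mulmx_sumr.
apply: summx_sub => l _; have le_ld : (l <= d)%N by rewrite -ltnS.
have [near_lk | far_lk] := boolP ((l <= k.+1)%N && (k <= l.+1)%N).
  apply: submx_trans (submxMl _ _) _; rewrite -(eigenspace_prim_idem le_ld).
  exact: (sumsmx_sup l).
have -> : Ev k *m E k *m Y *m E l = Ev k *m (E k *m Y *m E l) by rewrite !mulmxA.
by rewrite tri ?mulmx0 ?sub0mx //; move: far_lk; lia.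
Qed.

End Eigenspaces.

Lemma tridiagonal_system_sym (F : fieldType) n d (A As : 'M[F]_n) th ths :
  tridiagonal_system d A As th ths -> tridiagonal_system d As A ths th.
Proof.
case=> diagA diagAs [injA injAs] [eigA eigAs] [triA [triAs irr]].
by split => //; do !split => //; move=> W WAs WA; apply: irr.
Qed.

Section Flags.
Variables (F : fieldType) (n d : nat) (A As : 'M[F]_n) (th ths : nat -> F).
Hypothesis tds : tridiagonal_system d A As th ths.

Let diagA : diagonalizable A. Proof. by case: tds. Qed.
Let diagAs : diagonalizable As. Proof. by case: tds. Qed.
Let injA : {in gtn d.+1 &, injective th}. Proof. by case: tds => _ _ []. Qed.
Let injAs : {in gtn d.+1 &, injective ths}. Proof. by case: tds => _ _ []. Qed.
Let eigA a : eigenvalue A a <-> exists2 i, (i <= d)%N & a = th i.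
Proof. by case: tds => _ _ _ []. Qed.
Let eigAs a : eigenvalue As a <-> exists2 i, (i <= d)%N & a = ths i.
Proof. by case: tds => _ _ _ []. Qed.
Let triA i j : (i <= d)%N -> (j <= d)%N -> (i.+1 < j)%N || (j.+1 < i)%N ->
  prim_idem A th d i *m As *m prim_idem A th d j = 0.
Proof. by case: tds => _ _ _ _ [tri _]; apply: tri. Qed.
Let triAs i j : (i <= d)%N -> (j <= d)%N -> (i.+1 < j)%N || (j.+1 < i)%N ->
  prim_idem As ths d i *m A *m prim_idem As ths d j = 0.
Proof. by case: tds => _ _ _ _ [_ [tri _]]; apply: tri. Qed.
Let irr (W : 'M[F]_n) : (W *m A <= W)%MS -> (W *m As <= W)%MS ->
  (W == (0 : 'M_n))%MS \/ (W == 1%:M)%MS.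
Proof. by case: tds => _ _ _ _ [_ [_ irrW]]; apply: irrW. Qed.

Local Notation Ev i := (eigenspace A (th i)).
Local Notation Es i := (eigenspace As (ths i)).
Local Notation Vup j := (\sum_(l < d.+1 | (j <= l)%N) Ev l)%MS.
Local Notation Vdn j := (\sum_(l < d.+1 | (l < j)%N) Es l)%MS.

Lemma Vup_mulA j : (Vup j *m (A - (th j)%:M) <= Vup j.+1)%MS.
Proof.
apply: submx_trans (sum_eigenspaces_mul_shift _ _ _ _) _.
by apply: sumsmx_subpred => l /andP [le_jl ne_lj]; rewrite ltn_neqAle eq_sym ne_lj.
Qed.

Lemma Vdn_mulAs j : (Vdn j.+1 *m (As - (ths j)%:M) <= Vdn j)%MS.
Proof.
apply: submx_trans (sum_eigenspaces_mul_shift _ _ _ _) _.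
by apply: sumsmx_subpred => l /andP [lt_lj ne_lj]; rewrite ltn_neqAle ne_lj -ltnS.
Qed.

Lemma Vup_mulAs j : (Vup j.+1 *m As <= Vup j)%MS.
Proof.
rewrite sumsmxMr; apply/sumsmx_subP => l lt_jl; have le_ld : (l <= d)%N by rewrite -ltnS.
apply: submx_trans (eigenspace_mul_tridiag diagA eigA injA triA le_ld) _.
by apply: sumsmx_subpred => m /andP [_ le_lm]; move: lt_jl le_lm; lia.
Qed.

Lemma Vdn_mulA j : (Vdn j *m A <= Vdn j.+1)%MS.
Proof.
rewrite sumsmxMr; apply/sumsmx_subP => l lt_lj; have le_ld : (l <= d)%N by rewrite -ltnS.
apply: submx_trans (eigenspace_mul_tridiag diagAs eigAs injAs triAs le_ld) _.
by apply: sumsmx_subpred => m /andP [le_ml _]; move: lt_lj le_ml; lia.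
Qed.

Lemma Vup_eq0 j : (d < j)%N -> Vup j = 0.
Proof.
move=> lt_dj; rewrite big_pred0 // => l.
by apply/negbTE; rewrite -ltnNge (leq_trans (ltn_ord l)).
Qed.

Local Notation Y k := (Vdn k :&: Vup k)%MS.

Lemma cap_mulA k : (Y k *m (A - (th k)%:M) <= Y k.+1)%MS.
Proof.
rewrite sub_capmx; apply/andP; split.
  apply: submx_trans (submxMr _ (capmxSl _ _)) _.
  by rewrite submx_mul_shift ?Vdn_mulA // sumsmx_subpred // => l; apply: leqW.
exact: submx_trans (submxMr _ (capmxSr _ _)) (Vup_mulA k).
Qed.

Lemma cap_mulAs k : (Y k.+1 *m (As - (ths k)%:M) <= Y k)%MS.
Proof.
rewrite sub_capmx; apply/andP; split.
  exact: submx_trans (submxMr _ (capmxSl _ _)) (Vdn_mulAs k).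
apply: submx_trans (submxMr _ (capmxSr _ _)) _.
by rewrite submx_mul_shift ?Vup_mulAs // sumsmx_subpred // => l; apply: ltnW.
Qed.

Local Notation Vcap := (\sum_(k < d.+1) Y k.+1)%MS.

Lemma sum_cap_mulA : (Vcap *m A <= Vcap)%MS.
Proof.
rewrite sumsmxMr; apply/sumsmx_subP => k _.
have sYS : (Y k.+1 <= Vcap)%MS by apply: (sumsmx_sup k).
rewrite -(submx_mul_shift A (th k.+1) sYS); apply: submx_trans (cap_mulA _) _.
have [lt_kd | le_dk] := ltnP k.+1 d.+1; first exact: (sumsmx_sup (Ordinal lt_kd)).
by rewrite Vup_eq0 ?capmx0 ?sub0mx // leqW.
Qed.

Lemma sum_cap_mulAs : (Vcap *m As <= Vcap)%MS.
Proof.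
rewrite sumsmxMr; apply/sumsmx_subP => k _.
have sYS : (Y k.+1 <= Vcap)%MS by apply: (sumsmx_sup k).
rewrite -(submx_mul_shift As (ths k) sYS); apply: submx_trans (cap_mulAs _) _.
case: k => [[|k] lt_kd] /= in sYS *.
  by apply: submx_trans (capmxSl _ _) _; rewrite big_pred0 ?sub0mx.
exact: (sumsmx_sup (Ordinal (ltnW lt_kd))).
Qed.

Lemma sum_cap_eq0 : (Vcap <= (0 : 'M_n))%MS.
Proof.
case: (irr sum_cap_mulA sum_cap_mulAs) => /andP [] // _ full_Vcap.
have sVcap_Vup1 : (Vcap <= Vup 1)%MS.
  apply/sumsmx_subP => k _; apply: submx_trans (capmxSr _ _) _.
  by apply: sumsmx_subpred => l; lia.
have rank_Vdn1 : (0 < \rank (\sum_(l < d.+1 | (l < 1)%N) Ev l))%N.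
  have sEv0 : (Ev 0 <= \sum_(l < d.+1 | (l < 1)%N) Ev l)%MS by apply: (sumsmx_sup ord0).
  by rewrite (leq_trans _ (mxrankS sEv0)) // lt0n mxrank_eq0; apply/eigA; exists 0%N.
have := rank_eigenspaces_split diagA eigA injA 1.
have := mxrankS (submx_trans full_Vcap sVcap_Vup1); rewrite mxrank1.
by move=> *; exfalso; lia.
Qed.

Lemma cap_Vdn_Vup_eq0 k : (Vdn k :&: Vup k <= (0 : 'M_n))%MS.
Proof.
case: k => [|k]; first by rewrite big_pred0 // cap0mx.
have [lt_kd | le_dk] := ltnP k d.+1.
  exact: submx_trans (sumsmx_sup (Ordinal lt_kd) _ (submx_refl _)) sum_cap_eq0.
by rewrite Vup_eq0 ?capmx0 // leqW.
Qed.

Lemma rank_Vdn_Vup_le k : (\rank (Vdn k) + \rank (Vup k) <= n)%N.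
Proof.
rewrite -mxrank_sum_cap.
have /eqP -> : \rank (Vdn k :&: Vup k) == 0%N by rewrite mxrank_eq0 -submx0 cap_Vdn_Vup_eq0.
by rewrite addn0 rank_leq_col.
Qed.

End Flags.

Section SplitDecomposition.
Variables (F : fieldType) (n d : nat) (A As : 'M[F]_n) (th ths : nat -> F).
Hypothesis tds : tridiagonal_system d A As th ths.

Let diagA : diagonalizable A. Proof. by case: tds. Qed.
Let diagAs : diagonalizable As. Proof. by case: tds. Qed.
Let injA : {in gtn d.+1 &, injective th}. Proof. by case: tds => _ _ []. Qed.
Let injAs : {in gtn d.+1 &, injective ths}. Proof. by case: tds => _ _ []. Qed.
Let eigA a : eigenvalue A a <-> exists2 i, (i <= d)%N & a = th i.
Proof. by case: tds => _ _ _ []. Qed.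
Let eigAs a : eigenvalue As a <-> exists2 i, (i <= d)%N & a = ths i.
Proof. by case: tds => _ _ _ []. Qed.

Local Notation Ev i := (eigenspace A (th i)).
Local Notation Es i := (eigenspace As (ths i)).
Local Notation Vup j := (\sum_(l < d.+1 | (j <= l)%N) Ev l)%MS.
Local Notation Vdn j := (\sum_(l < d.+1 | (l < j)%N) Es l)%MS.
Local Notation U i := (split_comp d A As th ths i).

Lemma split_comp_eigen i : (U i :=: Vdn i.+1 :&: Vup i)%MS.
Proof.
apply: cap_eqmx; apply: eqmx_sums => j _; apply: eqmx_sym.
  by apply: (eigenspace_prim_idem diagAs eigAs injAs); rewrite -ltnS.
by apply: (eigenspace_prim_idem diagA eigA injA); rewrite -ltnS.
Qed.

Lemma rank_Vdn_Vup k : (\rank (Vdn k) + \rank (Vup k))%N = n.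
Proof.
have le_n := rank_Vdn_Vup_le tds k.
have le_n_sym := rank_Vdn_Vup_le (tridiagonal_system_sym tds) k.
have := rank_eigenspaces_split diagA eigA injA k.
have := rank_eigenspaces_split diagAs eigAs injAs k.
lia.
Qed.

Lemma Vdn_Vup_full k : (1%:M <= Vdn k + Vup k)%MS.
Proof.
rewrite sub1mx -col_leq_rank mxrank_disjoint_sum ?rank_Vdn_Vup //.
by apply/eqP; rewrite -submx0 (cap_Vdn_Vup_eq0 tds).
Qed.

Lemma rank_Vdn_succ k : (k <= d)%N -> \rank (Vdn k.+1) = (\rank (Es k) + \rank (Vdn k))%N.
Proof.
move=> le_kd; rewrite !rank_sum_eigenspaces //.
rewrite -!(big_ord_widen d.+1 (fun l => \rank (Es l))) ?(leqW le_kd) //.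
by rewrite big_ord_recr addnC.
Qed.

Lemma rank_split_comp i : (i <= d)%N -> \rank (U i) = \rank (Es i).
Proof.
move=> le_id; rewrite split_comp_eigen; have := mxrank_sum_cap (Vdn i.+1) (Vup i).
have -> : \rank (Vdn i.+1 + Vup i) = n.
  apply/eqP; rewrite eqn_leq rank_leq_col col_leq_rank -sub1mx.
  apply: submx_trans (Vdn_Vup_full i.+1) _; apply: addsmxS => //.
  by apply: sumsmx_subpred => l; apply: ltnW.
have := rank_Vdn_Vup i; have := rank_Vdn_succ le_id.
lia.
Qed.

Lemma split_comp_span : (1%:M <= \sum_(i < d.+1) U i)%MS.
Proof.
rewrite (eqmx_sums (fun (i : 'I_d.+1) _ => split_comp_eigen i)).
suff Vdn_sub k : (k <= d.+1)%N ->
    (Vdn k <= \sum_(i < d.+1 | (i < k)%N) (Vdn i.+1 :&: Vup i))%MS.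
  apply: submx_trans (eigenspaces_span diagAs eigAs) _.
  by move: (Vdn_sub d.+1 (leqnn _)); rewrite !(eq_bigl _ _ (fun i => ltn_ord i)).
elim: k => [_|k IH lt_kd]; first by rewrite big_pred0 ?sub0mx.
have sVdn : (Vdn k <= Vdn k.+1)%MS by apply: sumsmx_subpred => l; apply: leqW.
have /eqmxP/andP [_ modl] := matrix_modl (Vup k) sVdn.
have Vdn_sub : (Vdn k.+1 <= Vdn k + (Vdn k.+1 :&: Vup k))%MS.
  rewrite capmxC; apply: submx_trans modl.
  by rewrite sub_capmx submx_refl andbT (submx_trans (submx1 _) (Vdn_Vup_full k)).
apply: submx_trans Vdn_sub _; rewrite addsmx_sub; apply/andP; split.
  apply: submx_trans (IH (ltnW lt_kd)) _.
  by apply: sumsmx_subpred => i; apply: leqW.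
exact: (sumsmx_sup (Ordinal lt_kd)).
Qed.

Lemma split_comp_mulAs_succ i : (U i.+1 *m (As - (ths i.+1)%:M) <= U i)%MS.
Proof.
rewrite (eqmxMr _ (split_comp_eigen _)) split_comp_eigen sub_capmx; apply/andP; split.
  exact: submx_trans (submxMr _ (capmxSl _ _)) (Vdn_mulAs d As ths _).
apply: submx_trans (submxMr _ (capmxSr _ _)) _.
by rewrite submx_mul_shift ?(Vup_mulAs tds) // sumsmx_subpred // => l; apply: ltnW.
Qed.

Lemma split_comp_mulAs0 : (U 0 *m (As - (ths 0)%:M) <= (0 : 'M_n))%MS.
Proof.
rewrite (eqmxMr _ (split_comp_eigen _)).
apply: submx_trans (submxMr _ (capmxSl _ _)) _.
by apply: submx_trans (Vdn_mulAs d As ths 0) _; rewrite big_pred0.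
Qed.

End SplitDecomposition.

Section Deformation.
Variables (F : fieldType) (n d : nat) (As K : 'M[F]_n) (mu : nat -> F).
Variables (U : nat -> 'M[F]_n) (t : F).
Hypothesis mu_inj : {in gtn d.+1 &, injective mu}.
Hypothesis spanU : (1%:M <= \sum_(i < d.+1) U i)%MS.
Hypothesis scalarK :
  forall i, (i <= d)%N -> forall v : 'rV_n, (v <= U i)%MS -> v *m K = mu i *: v.
Hypothesis lowerAs0 : (U 0 *m (As - (mu 0)%:M) <= (0 : 'M_n))%MS.
Hypothesis lowerAsS : forall i, (U i.+1 *m (As - (mu i.+1)%:M) <= U i)%MS.

Local Notation P i := (prim_idem K mu d i).

Lemma mulmx_sum_prim_idem (c : nat -> F) k (v : 'rV_n) : (k <= d)%N -> (v <= U k)%MS ->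
  v *m (\sum_(i < d.+1) c i *: P i) = c k *: v.
Proof.
move=> le_kd Uv; have Kv : (v <= eigenspace K (mu k))%MS by apply/eigenspaceP/scalarK.
rewrite mulmx_sumr (bigD1 (Ordinal (le_kd : (k < d.+1)%N))) //= -scalemxAr.
rewrite (prim_idem_eigen mu_inj _ le_kd Kv) eqxx big1 ?addr0 // => j ne_jk.
by rewrite -scalemxAr (prim_idem_eigen mu_inj _ le_kd Kv) ifN ?scaler0.
Qed.

Local Notation D := (\sum_(i < d.+1) t ^+ i *: P i).

Lemma deformation_unitmx : t != 0 -> D \in unitmx.
Proof.
move=> t_neq0; have DD' : D *m (\sum_(i < d.+1) t^-1 ^+ i *: P i) = 1%:M.
  apply: (mx_eq_on_span spanU) => k le_kd v Uv.
  rewrite mulmxA (mulmx_sum_prim_idem _ le_kd Uv) -scalemxAl (mulmx_sum_prim_idem _ le_kd Uv).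
  by rewrite scalerA -exprMn mulfV // expr1n scale1r mulmx1.
by case/mulmx1_unit: DD'.
Qed.

Lemma deformation_conj : (t *: As + (1 - t) *: K) *m D = D *m As.
Proof.
apply: (mx_eq_on_span spanU) => k le_kd v Uv.
have vND : t *: (v *m (As - (mu k)%:M) *m D) = t ^+ k *: (v *m (As - (mu k)%:M)).
  case: k le_kd Uv => [|k] le_kd Uv.
    have /eqP -> : v *m (As - (mu 0)%:M) == 0.
      by rewrite -submx0 (submx_trans (submxMr _ Uv) lowerAs0).
    by rewrite mul0mx !scaler0.
  have UvN := submx_trans (submxMr (As - (mu k.+1)%:M) Uv) (lowerAsS k).
  by rewrite (mulmx_sum_prim_idem _ (ltnW le_kd) UvN) scalerA -exprS.
have vAs : v *m As = mu k *: v + v *m (As - (mu k)%:M).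
  by rewrite mulmxBr mul_mx_scalar addrC subrK.
have vB : v *m (t *: As + (1 - t) *: K) = mu k *: v + t *: (v *m (As - (mu k)%:M)).
  rewrite mulmxDr -!scalemxAr vAs (scalarK le_kd Uv) scalerDr addrAC -scalerDl.
  by rewrite addrCA subrr addr0 scale1r.
rewrite mulmxA vB mulmxDl -scalemxAl (mulmx_sum_prim_idem _ le_kd Uv) -scalemxAl vND.
by rewrite mulmxA (mulmx_sum_prim_idem _ le_kd Uv) -scalemxAl vAs scalerDr !scalerA mulrC.
Qed.

End Deformation.

Theorem split_deformation_spectrum (F : fieldType) n d (A As K : 'M[F]_n)
    (th ths : nat -> F) (t : F) :
  tridiagonal_system d A As th ths ->
  (forall i, (i <= d)%N -> forall v : 'rV[F]_n,
     (v <= split_comp d A As th ths i)%MS -> v *m K = ths i *: v) ->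
  let Bs := t *: As + (1 - t) *: K in
  [/\ diagonalizable Bs,
      (forall a, eigenvalue Bs a <-> exists2 i, (i <= d)%N & a = ths i) &
      (forall i, (i <= d)%N ->
         \rank (eigenspace Bs (ths i)) = \rank (split_comp d A As th ths i))].
Proof.
move=> tds scalarK Bs; have [_ diagAs [_ injAs] [_ eigAs] _] := tds.
have spanU := split_comp_span tds.
have nzU i : (i <= d)%N -> split_comp d A As th ths i != 0.
  move=> le_id; rewrite -mxrank_eq0 (rank_split_comp tds le_id) mxrank_eq0.
  by apply/eigAs; exists i.
have [t0 | t_neq0] := eqVneq t 0.
  have -> : Bs = K by rewrite /Bs t0 scale0r add0r subr0 scale1r.
  exact: scalar_family_spectrum scalarK spanU injAs nzU.
pose D := \sum_(i < d.+1) t ^+ i *: prim_idem K ths d i.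
have uD : D \in unitmx := deformation_unitmx injAs spanU scalarK t_neq0.
have BD : Bs *m D = D *m As.
  exact: deformation_conj injAs spanU scalarK (split_comp_mulAs0 tds) (split_comp_mulAs_succ tds).
have [diagBs eigBs rankBs] := conj_spectrum diagAs eigAs injAs uD BD.
by split=> // i le_id; rewrite rankBs // (rank_split_comp tds le_id).
Qed.

Theorem lemma7p6 (F : closedFieldType) (n : nat) (q : F)
  (hn : (0 < n)%N)
  (hq0 : q != 0) (hq : forall m : nat, (0 < m)%N -> q ^+ m != 1)
  (d : nat) (hd : (1 <= d)%N)
  (A As : 'M[F]_n)
  (hTD : tridiagonal_system d A As (qtheta q d) (qthetas q d))
  (hS : qSerre q A As)
  (K : 'M[F]_n)
  (hK : forall i : nat, (i <= d)%N -> forall v : 'rV[F]_n,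
      (v <= split_comp d A As (qtheta q d) (qthetas q d) i)%MS ->
      v *m K = qthetas q d i *: v)
  (t : F) :
  let Bs := t *: As + (1 - t) *: K in
  [/\ diagonalizable Bs,
      (forall a, eigenvalue Bs a <-> exists2 i, (i <= d)%N & a = qthetas q d i) &
      (forall i : nat, (i <= d)%N ->
         \rank (eigenspace Bs (qthetas q d i))
         = \rank (split_comp d A As (qtheta q d) (qthetas q d) i))].
Proof. exact: split_deformation_spectrum hTD hK. Qed.
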